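(* Let $T$ be a tree, $uv\in E(T)$, and $T_u$ the connected component of $T\setminus uv$ containing $u$. If $u$ is saturated in $T_u$, then $u$ is saturated in $T$.
   Context: A $2$-matching of a graph $G$ is a set of edges such that every vertex is incident to at most two of them; a maximum $2$-matching is one of largest possible size. A vertex $w$ is saturated in $G$ if every maximum $2$-matching of $G$ has exactly two edges incident to $w$. *)

(* Finite simple graphs as (vertex set, edge set) inside an
   ambient finType; an edge is a 2-element subset of the vertex set. *)
From mathcomp Require Import all_boot.
Set Implicit Arguments. Unset Strict Implicit. Unset Printing Implicit Defensive.

Record graph (T : finType) := Graph { verts : {set T}; edges : {set {set T}} }.

Section Graphs.
Variable T : finType.
Implicit Types (G : graph T) (x y : T) (M : {set {set T}}).

Definition wf_graph G : Prop :=
  forall f, f \in edges G ->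
    exists x y, [/\ x != y, x \in verts G, y \in verts G & f = [set x; y]].

Definition adj G : rel T := fun x y => (x != y) && ([set x; y] \in edges G).

Definition connected G : Prop :=
  forall x y, x \in verts G -> y \in verts G -> connect (adj G) x y.

Definition acyclic G : Prop :=
  forall c : seq T, ucycle (adj G) c -> size c < 3.

Definition is_tree G : Prop := [/\ wf_graph G, connected G & acyclic G].

Definition del_edge G (f : {set T}) : graph T := Graph (verts G) (edges G :\ f).

Definition induced G (S : {set T}) : graph T :=
  Graph S [set f in edges G | f \subset S].

Definition component G x : graph T :=
  induced G [set y in verts G | connect (adj G) x y].

Definition incident M x : {set {set T}} := [set f in M | x \in f].

Definition two_matching G M : Prop :=
  M \subset edges G /\ forall x, #|incident M x| <= 2.

Definition max_two_matching G M : Prop :=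
  two_matching G M /\ forall M', two_matching G M' -> #|M'| <= #|M|.

Definition saturated G w : Prop :=
  forall M, max_two_matching G M -> #|incident M w| = 2.

End Graphs.

From mathcomp Require Import all_boot zify.
Set Implicit Arguments. Unset Strict Implicit. Unset Printing Implicit Defensive.

(* Let H be the component of u in T - uv, M a maximum 2-matching of T and N
   one of H.  Replacing the edges of M inside H by N gives a 2-matching of T,
   so |N| <= |M ∩ E(H)| + [uv ∈ M].  If uv ∉ M, then M ∩ E(H) is maximum in H
   and covers u twice.  If uv ∈ M, u could only lose its second M-edge if
   M ∩ E(H) avoided u, and this is impossible: in a forest in which u is
   saturated, every 2-matching avoiding u is at least two edges smaller than a
   maximum one.  For the latter, the symmetric difference of the two
   2-matchings is a forest in which u has degree 2, so it has a leaf x != u;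
   moving the leaf edge at x across (and dropping an edge at its other end if
   needed) either creates a maximum 2-matching missing u, or contradicts
   maximality, or shrinks the symmetric difference. *)

Section TwoMatchings.
Variable T : finType.
Implicit Types (G H : graph T) (x y z w : T) (e f g : {set T}).
Implicit Types (A B C M N : {set {set T}}).

Lemma card_incidentU1 A f z : f \notin A ->
  #|incident (f |: A) z| = #|incident A z| + (z \in f).
Proof.
move=> fA.
have -> : incident (f |: A) z = if z \in f then f |: incident A z else incident A z.
  apply/setP => h; rewrite !inE; case: ifP => zf; rewrite ?inE;
  by case: (h =P f) => [->|]; rewrite ?zf ?andbF.
case: ifP => _; last by rewrite addn0.
by rewrite cardsU1 inE (negbTE fA) addn1.
Qed.

Lemma card_incidentD1 B g z : g \in B ->
  #|incident (B :\ g) z| + (z \in g) = #|incident B z|.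
Proof.
move=> gB; rewrite [RHS](cardsD1 g) inE gB /= addnC.
by congr (_ + _); apply: eq_card => h; rewrite !inE; case: (h == g).
Qed.

Lemma card_incident_swap B f g z : f \notin B -> g \in B ->
  #|incident ((f |: B) :\ g) z| + (z \in g) = #|incident B z| + (z \in f).
Proof.
by move=> fB gB; rewrite card_incidentD1 ?card_incidentU1 // !inE gB orbT.
Qed.

Lemma card_swap B f g : f \notin B -> g \in B -> #|(f |: B) :\ g| = #|B|.
Proof.
move=> fB gB; have := cardsD1 g (f |: B).
by rewrite cardsU1 fB !inE gB orbT add1n => -[].
Qed.

Lemma card_incident_le1 B C f z : #|incident C z| <= 2 -> f \in C -> z \in f ->
  f \notin B -> {subset incident B z <= C} -> #|incident B z| <= 1.
Proof.
move=> Cz fC zf fB BC.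
have /subset_leq_card : incident B z \subset incident C z :\ f.
  apply/subsetP => h hBz; have hC := BC h hBz; move: hBz; rewrite !inE hC.
  by case/andP => hB ->; rewrite !andbT; apply: contraNneq fB => <-.
have := cardsD1 f (incident C z); rewrite inE fC zf add1n => E.
by move=> /leq_trans; apply; move: Cz; rewrite E ltnS.
Qed.

Definition symdiff C B := (C :\: B) :|: (B :\: C).

Lemma symdiffC C B : symdiff C B = symdiff B C.
Proof. by rewrite /symdiff setUC. Qed.

Lemma card_symdiff_swap C B f g : f \in C :\: B -> g \in B :\: C ->
  #|symdiff C ((f |: B) :\ g)| < #|symdiff C B|.
Proof.
rewrite !inE => /andP [fB fC] /andP [gC gB].
have fg : f != g by apply: contraNneq fB => ->.
have sub : symdiff C ((f |: B) :\ g) \subset symdiff C B :\ f.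
  apply/subsetP => h; rewrite !inE.
  case: (eqVneq h f) => [->|hf]; first by rewrite fC fg.
  by case: (eqVneq h g) => [->|hg] /=; rewrite ?(negbTE gC).
apply: leq_ltn_trans (subset_leq_card sub) _.
by rewrite [X in _ < X](cardsD1 f) !inE fC fB.
Qed.

Lemma two_matchingU G A B : two_matching G A -> two_matching G B ->
  (forall x, incident A x = set0 \/ incident B x = set0) -> two_matching G (A :|: B).
Proof.
move=> [AG Ad] [BG Bd] AB; split; first by rewrite subUset AG.
move=> x; have -> : incident (A :|: B) x = incident A x :|: incident B x.
  by apply/setP => f; rewrite !inE andb_orl.
by case: (AB x) => ->; rewrite ?set0U ?setU0.
Qed.

Lemma two_matchingU1 G B f x y : two_matching G B -> f \in edges G -> f \notin B ->
  f = [set x; y] -> #|incident B x| <= 1 -> #|incident B y| <= 1 ->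
  two_matching G (f |: B).
Proof.
move=> [BG Bd] fG fB Ef Bx By; split; first by rewrite subUset sub1set fG.
move=> z; rewrite card_incidentU1 // Ef !inE.
case: (eqVneq z x) => [->|_]; first by rewrite addn1.
by case: (eqVneq z y) => [->|_]; rewrite ?addn1 ?addn0.
Qed.

Lemma two_matching_swap G B f g x y : two_matching G B -> f \in edges G ->
  f \notin B -> g \in B -> f = [set x; y] -> y \in g -> #|incident B x| <= 1 ->
  two_matching G ((f |: B) :\ g).
Proof.
move=> [BG Bd] fG fB gB Ef yg Bx; split.
  by apply: subset_trans (subsetDl _ _) _; rewrite subUset sub1set fG.
move=> z; have := card_incident_swap z fB gB; have := Bd z.
have -> : (z \in f) = (z == x) || (z == y) by rewrite Ef !inE.
case: (eqVneq z y) => [->|_]; first by rewrite yg orbT /=; lia.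
case: (eqVneq z x) => [->|_] /=; first by move: Bx; case: (x \in g) => /=; lia.
by case: (z \in g) => /=; lia.
Qed.

Lemma incidentS M N x : M \subset N -> incident M x \subset incident N x.
Proof.
by move=> /subsetP MN; apply/subsetP => f; rewrite !inE => /andP [/MN -> ->].
Qed.

Lemma two_matchingS G M N : two_matching G M -> N \subset M -> two_matching G N.
Proof.
move=> [MG Md] NM; split=> [|x]; first exact: subset_trans NM MG.
exact: leq_trans (subset_leq_card (incidentS x NM)) (Md x).
Qed.

Lemma two_matching_restrict G H M : two_matching G M -> two_matching H (M :&: edges H).
Proof.
move=> [_ Md]; split=> [|x]; first exact: subsetIr.
exact: leq_trans (subset_leq_card (incidentS x (subsetIl _ _))) (Md x).
Qed.

Lemma max_two_matchingW G N M : max_two_matching G N -> two_matching G M ->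
  #|N| <= #|M| -> max_two_matching G M.
Proof. by move=> [_ Nmax] MG NM; split=> // M' /Nmax /leq_trans; apply. Qed.

Lemma exists_max_two_matching G : exists N, max_two_matching G N.
Proof.
pose P M := (M \subset edges G) && [forall x, #|incident M x| <= 2].
have P0 : P set0.
  rewrite /P sub0set; apply/forallP => x.
  by rewrite (_ : incident set0 x = set0) ?cards0 //; apply/setP => f; rewrite !inE.
have [N /andP [NG /forallP Nd] Nmax] := arg_maxnP (fun M => #|M|) P0.
by exists N; split=> // M [MG Md]; apply: Nmax; rewrite /P MG; apply/forallP.
Qed.

Lemma leaf_exchange G B C f x y : two_matching G B -> two_matching G C ->
  f \in C :\: B -> f = [set x; y] ->
  (forall h, h \in symdiff C B -> x \in h -> h = f) ->
  two_matching G (f |: B) \/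
  exists2 g, g \in B :\: C & y \in g /\ two_matching G ((f |: B) :\ g).
Proof.
move=> BG [CG Cd] /setDP [fC fB] Ef leaf.
have fG : f \in edges G := subsetP CG _ fC.
have [xf yf] : x \in f /\ y \in f by rewrite Ef !inE !eqxx orbT.
have Bx : #|incident B x| <= 1.
  apply: (card_incident_le1 (Cd x) fC xf fB) => h; rewrite inE => /andP [hB xh].
  apply: contraT => hC; suff hf : h = f by rewrite -hf hB in fB.
  by apply: leaf xh; rewrite !inE hB hC orbT.
case: (leqP #|incident B y| 1) => By.
  by left; apply: two_matchingU1 BG fG fB Ef Bx By.
right; case: (pickP [pred g | (g \in B :\: C) && (y \in g)]) => [g|noG].
  move=> /andP [gBC yg]; exists g => //; split=> //.
  by apply: two_matching_swap BG fG fB _ Ef yg Bx; case/setDP: gBC.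
suff : #|incident B y| <= 1 by rewrite leqNgt By.
apply: (card_incident_le1 (Cd y) fC yf fB) => h; rewrite inE => /andP [hB yh].
by apply: contraT => hC; have := noG h; rewrite /= !inE hB hC yh.
Qed.

Lemma wf_edge_other G f x : wf_graph G -> f \in edges G -> x \in f ->
  exists y, [/\ x != y, y \in verts G & f = [set x; y]].
Proof.
move=> wf fG; have [p [q [pq pG qG ->]]] := wf f fG.
by rewrite !inE => /orP [] /eqP ->; [exists q | exists p; rewrite eq_sym setUC].
Qed.

Lemma wf_graph_induced G S : wf_graph G -> wf_graph (induced G S).
Proof.
move=> wf f; rewrite inE => /andP [fG /subsetP fS].
have [x [y [xy _ _ Ef]]] := wf f fG; exists x, y.
by split=> //; apply: fS; rewrite Ef !inE eqxx ?orbT.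
Qed.

Lemma wf_graph_del_edge G e : wf_graph G -> wf_graph (del_edge G e).
Proof. by move=> wf f /setD1P [_ /wf]. Qed.

Lemma acyclic_sub G H : edges H \subset edges G -> acyclic G -> acyclic H.
Proof.
move=> HG ac c /andP [cy uq]; apply: ac; rewrite /ucycle uq (sub_cycle _ cy) //.
by move=> x y /andP [xy /(subsetP HG) xyG]; rewrite /adj xy xyG.
Qed.

Lemma component_edges_sub G w : edges (component G w) \subset edges G.
Proof. by apply/subsetP => f; rewrite inE => /andP []. Qed.

Lemma component_del_edge_sub G e w :
  edges (component (del_edge G e) w) \subset edges G :\ e.
Proof. exact: component_edges_sub. Qed.

Lemma component_edge G w f x : wf_graph G -> f \in edges G -> x \in f ->
  x \in verts (component G w) -> f \in edges (component G w).
Proof.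
move=> wf fG xf; rewrite inE => /andP [xG wx].
have [y [xy yG Ef]] := wf_edge_other wf fG xf.
have wy : connect (adj G) w y.
  by apply: connect_trans wx (connect1 _); rewrite /adj xy -Ef.
by rewrite inE fG Ef subUset !sub1set !inE xG wx yG wy.
Qed.

Lemma two_matching_cut_bound G e w M N : wf_graph G -> max_two_matching G M ->
  two_matching (component (del_edge G e) w) N ->
  #|N| <= #|M :&: edges (component (del_edge G e) w)| + (e \in M).
Proof.
set H := component _ w => wf [MG Mmax] NH.
have HG : edges H \subset edges G.
  exact: subset_trans (component_del_edge_sub G e w) (subD1set _ _).
pose Mo := (M :\: edges H) :\ e.
have NMo : two_matching G (N :|: Mo).
  apply: two_matchingU; first by case: NH => NH Nd; split=> //; apply: subset_trans HG.
    exact: two_matchingS MG (subset_trans (subsetDl _ _) (subsetDl _ _)).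
  move=> x; case: (boolP (x \in verts H)) => xH; [right | left];
    apply/setP => f; rewrite in_set0 inE; apply/negP => /andP [fX xf].
    case/setD1P: fX => fe /setDP [fM /negP]; apply.
    apply: (component_edge (wf_graph_del_edge (e := e) wf) _ xf xH).
    by rewrite !inE fe (subsetP MG.1).
  have /setIdP [_ /subsetP /(_ x xf)] := subsetP NH.1 f fX; exact/negP.
have := Mmax _ NMo; rewrite cardsU (_ : N :&: Mo = set0) ?cards0 ?subn0; last first.
  apply/setP => f; rewrite in_set0; apply/negP => /setIP [/(subsetP NH.1) fH].
  by case/setD1P => _ /setDP [_]; rewrite fH.
have eH : e \notin edges H.
  by apply/negP => /(subsetP (component_del_edge_sub G e w)); rewrite !inE eqxx.
rewrite -(cardsID (edges H) M) (cardsD1 e (M :\: edges H)) in_setD eH /= -/Mo.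
by rewrite addnA leq_add2r.
Qed.

Definition eadj (F : {set {set T}}) : rel T :=
  fun x y => (x != y) && ([set x; y] \in F).

Lemma back_edge_ucycle F x s a : path (eadj F) x s -> uniq (x :: s) ->
  a \in x :: s -> eadj F (last x s) a ->
  exists c, ucycle (eadj F) c /\
     (size c < 3 -> exists r, x :: s = rcons (rcons r a) (last x s)).
Proof.
move=> p un; rewrite in_cons; case: (a =P x) => [-> _ | /eqP nax /= as_] e.
  exists (x :: s); split; first by rewrite /ucycle un andbT /= rcons_path p e.
  case: s p un e => [|y [|z s]] //= _ _; first by rewrite /eadj eqxx.
  by move=> _ _; exists [::].
case/splitPr: as_ p un e => s1 s2 p un e; rewrite last_cat /= in e.
exists (a :: s2); split.
  apply/andP; split; last by move: un; rewrite /= cat_uniq => /andP [_ /and3P []].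
  by rewrite /= rcons_path e andbT; rewrite cat_path /= in p; case/and3P: p.
case: s2 {p un} e => [|y [|z s2]] //=; first by rewrite /eadj eqxx.
by move=> _ _; exists (x :: s1); rewrite last_cat /= -!cats1 -catA.
Qed.

Section Forest.
Variable H : graph T.
Hypotheses (wfH : wf_graph H) (acH : acyclic H).
Implicit Types F : {set {set T}}.

Lemma ucycle_eadj_small F c : F \subset edges H -> ucycle (eadj F) c -> size c < 3.
Proof. by move=> FH; apply: (@acyclic_sub H (Graph (verts H) F)). Qed.

Lemma eadj_neighbours F z : F \subset edges H -> 1 < #|incident F z| ->
  exists a b, [/\ a != b, eadj F z a & eadj F z b].
Proof.
move=> FH /card_gt1P [f [g [+ + fg]]]; rewrite !inE => /andP [fF zf] /andP [gF zg].
have [a [za _ Ef]] := wf_edge_other wfH (subsetP FH _ fF) zf.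
have [b [zb _ Eg]] := wf_edge_other wfH (subsetP FH _ gF) zg.
exists a, b; split; rewrite /eadj ?za ?zb -?Ef -?Eg //.
by apply: contra fg => /eqP ab; rewrite Ef Eg ab.
Qed.

Lemma uniq_path_extend F x s : F \subset edges H -> path (eadj F) x s ->
  uniq (x :: s) -> 1 < #|incident F (last x s)| ->
  exists2 a, eadj F (last x s) a & a \notin x :: s.
Proof.
move=> FH p un /(eadj_neighbours FH) [a [b [ab ea eb]]].
have [aP|] := boolP (a \in x :: s); last by exists a.
have [bP|] := boolP (b \in x :: s); last by exists b.
have penultimate c : c \in x :: s -> eadj F (last x s) c ->
    exists r, x :: s = rcons (rcons r c) (last x s).
  move=> cP ec; have [cyc [ucyc short]] := back_edge_ucycle p un cP ec.
  exact: short (ucycle_eadj_small FH ucyc).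
have [ra Ea] := penultimate a aP ea; have [rb Eb] := penultimate b bP eb.
by move: Ea; rewrite Eb => /rcons_inj [] /rcons_inj [] _ ba; rewrite ba eqxx in ab.
Qed.

Lemma exists_leaf F z : F \subset edges H -> 0 < #|incident F z| ->
  exists x, #|incident F x| = 1.
Proof.
move=> FH z0; case: (pickP (fun x => #|incident F x| == 1)) => [x /eqP | no_leaf].
  by exists x.
have deg2 x : 0 < #|incident F x| -> 1 < #|incident F x|.
  by have /= := no_leaf x; case: #|_| => [|[|n]].
have deg_nbr x a : eadj F x a -> 0 < #|incident F a|.
  by case/andP => _ xa; apply/card_gt0P; exists [set x; a]; rewrite !inE xa eqxx orbT.
have long n : exists x s, [/\ path (eadj F) x s, uniq (x :: s),
    0 < #|incident F (last x s)| & n <= size s].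
  elim: n => [|n [x [s [p un l sz]]]]; first by exists z, [::].
  have [a ea aP] := uniq_path_extend FH p un (deg2 _ l).
  exists x, (rcons s a); rewrite rcons_path p ea last_rcons size_rcons -rcons_cons.
  by rewrite rcons_uniq aP un (deg_nbr _ _ ea).
have [x [s [_ un _ sz]]] := long #|T|.
by have := max_card (mem (x :: s)); rewrite (card_uniqP un) /= ltnNge sz.
Qed.

Lemma symdiff_leaf B C z : B \subset edges H -> C \subset edges H ->
  1 < #|incident (symdiff C B) z| ->
  exists x f y, [/\ x != z, f \in symdiff C B, f = [set x; y] &
    forall h, h \in symdiff C B -> x \in h -> h = f].
Proof.
move=> BH CH Dz; have DH : symdiff C B \subset edges H.
  by rewrite subUset !(subset_trans (subsetDl _ _)).
have [x Dx] := exists_leaf DH (ltnW Dz).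
have /cards1P [f If] : #|incident (symdiff C B) x| == 1 by rewrite Dx.
have := set11 f; rewrite -If inE => /andP [fD xf].
have [y [_ _ Ef]] := wf_edge_other wfH (subsetP DH _ fD) xf.
exists x, f, y; split => // [|h hD xh]; first by apply: contraTneq Dz => <-; rewrite Dx.
by apply/set1P; rewrite -If inE hD xh.
Qed.

Variable u : T.
Hypothesis satu : saturated H u.

Lemma saturated_exchange_step N A : max_two_matching H N -> two_matching H A ->
  incident A u = set0 -> #|N| <= #|A|.+1 ->
  exists N' A', [/\ max_two_matching H N', two_matching H A',
    incident A' u = set0, #|N'| <= #|A'|.+1 & #|symdiff N' A'| < #|symdiff N A|].
Proof.
move=> NM AM A0 NA; have [[NH Nd] Nmax] := NM; have [AH Ad] := AM.
have Du : 1 < #|incident (symdiff N A) u|.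
  rewrite -(satu NM); apply: subset_leq_card; apply/subsetP => h.
  rewrite !inE => /andP [hN uh]; rewrite hN uh /= !andbT orbF; apply/negP => hA.
  by have := in_set0 h; rewrite -A0 inE hA uh.
have [x [f [y [xu fD Ef leaf]]]] := symdiff_leaf AH NH Du.
case/setUP: fD => fD.
  have [fA|[g gAN [yg A'M]]] := leaf_exchange AM NM.1 fD Ef leaf.
    have /satu : max_two_matching H (f |: A).
      by apply: max_two_matchingW NM fA _; rewrite cardsU1 (setDP fD).2.
    by rewrite card_incidentU1 ?(setDP fD).2 // A0 cards0; case: (u \in f).
  have [gA gN] := setDP gAN; have fA := (setDP fD).2.
  have uf : u \notin f.
    rewrite Ef !inE negb_or eq_sym xu /=; apply: contraTneq yg => <-.
    by apply/negP => ug; have := in_set0 g; rewrite -A0 inE gA ug.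
  exists N, ((f |: A) :\ g); split => //; last exact: card_symdiff_swap fD gAN.
    apply: cards0_eq; have := card_incident_swap u fA gA.
    by rewrite A0 cards0 (negbTE uf) addn0 => /eqP; rewrite addn_eq0 => /andP [/eqP].
  by rewrite card_swap.
rewrite symdiffC in leaf.
have [fN|[g gNA [yg N'M]]] := leaf_exchange NM.1 AM fD Ef leaf.
  by have := Nmax _ fN; rewrite cardsU1 (setDP fD).2 ltnn.
have [gN gA] := setDP gNA; have fN := (setDP fD).2.
exists ((f |: N) :\ g), A; rewrite card_swap //; split => //.
  by apply: max_two_matchingW NM N'M _; rewrite card_swap.
by rewrite symdiffC (symdiffC N); apply: card_symdiff_swap.
Qed.

Lemma saturated_avoiding_gap N A : max_two_matching H N -> two_matching H A ->
  incident A u = set0 -> #|A|.+2 <= #|N|.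
Proof.
have [n] := ubnP #|symdiff N A|; elim: n N A => // n IH N A lt NM AM A0.
rewrite ltnNge; apply/negP => NA.
have [N' [A' [NM' AM' A0' NA' lt']]] := saturated_exchange_step NM AM A0 NA.
by have := IH N' A' (leq_trans lt' lt) NM' AM' A0'; rewrite ltnNge NA'.
Qed.

End Forest.

End TwoMatchings.

Theorem proposition2p6 (T : finType) (G : graph T) (u v : T) :
  is_tree G -> u != v -> [set u; v] \in edges G ->
  saturated (component (del_edge G [set u; v]) u) u ->
  saturated G u.
Proof.
move=> [wfG _ acG] _ _ satH M MM.
set H := component _ u in satH *.
have HG : edges H \subset edges G.
  exact: subset_trans (component_del_edge_sub _ _ _) (subD1set _ _).
have wfH : wf_graph H by apply/wf_graph_induced/wf_graph_del_edge.
have acH : acyclic H := acyclic_sub HG acG.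
have [N NM] := exists_max_two_matching H.
have MH := two_matching_restrict H MM.1.
have bound := two_matching_cut_bound wfG MM NM.1.
have MHu := incidentS u (subsetIl M (edges H)).
apply/eqP; rewrite eqn_leq MM.1.2 /=.
case uvM : ([set u; v] \in M) in bound.
  have [/cards0_eq MH0 | MHu_gt0] := posnP #|incident (M :&: edges H) u|.
    have := saturated_avoiding_gap wfH acH satH NM MH MH0.
    by move=> /leq_trans /(_ bound); rewrite /= addn1 ltnn.
  have uvH : [set u; v] \notin edges H.
    by apply/negP => /(subsetP (component_del_edge_sub _ _ _)); rewrite !inE eqxx.
  have sub : [set u; v] |: incident (M :&: edges H) u \subset incident M u.
    by rewrite subUset sub1set MHu !inE uvM eqxx.
  apply: leq_trans (subset_leq_card sub).
  by rewrite cardsU1 inE in_setI (negbTE uvH) andbF.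
have MHM : max_two_matching H (M :&: edges H).
  by apply: max_two_matchingW NM MH _; rewrite /= addn0 in bound.
by rewrite -(satH _ MHM) subset_leq_card.
Qed.
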